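(* For every instance of the CVRPTW with temporal dependencies that has a feasible solution, there exists an optimal feasible solution in which, for every route and every fragment $(v_1,\dots,v_\ell)$ of that route, the start times satisfy $b_{v_i}=\max\{b_{v_{i-1}}+d_{v_{i-1}}+t_{v_{i-1}v_i},\ \alpha_{v_i}\}$ for all $i=2,\dots,\ell-1$ (i.e., every fragment is performed according to a compact schedule).
   Context: Instance data: a task set $V=\{1,\dots,n\}$, a depot $0$, $N=V\cup\{0\}$. For distinct $u,v\in N$ there are a travel time $t_{uv}\ge 0$ and travel cost $c_{uv}\ge0$, both satisfying the triangle inequality. Each $v\in N$ has a duration $d_v\ge 0$, demand $q_v\ge 0$ and a time window $[\alpha_v,\beta_v]$ in which it must start; the depot has $d_0=q_0=0$, $[\alpha_0,\beta_0]=[0,T_{\max}]$. Vehicle capacity is $Q$ and there are $|K|$ vehicles. $D$ is a set of unordered pairs $\{u,v\}$ of distinct tasks, $V_D=\{v\in V:\exists \{u,v\}\in D\}$, and each $\{u,v\}\in D$ carries nonnegative parameters $\delta^{\min}_{uv},\delta^{\max}_{uv},\delta^{\min}_{vu},\delta^{\max}_{vu}$; start times $b_u,b_v$ satisfy the dependency if either $b_u\le b_v$ and $\delta^{\min}_{uv}\le b_v-b_u\le\delta^{\max}_{uv}$, or $b_v\le b_u$ and $\delta^{\min}_{vu}\le b_u-b_v\le\delta^{\max}_{vu}$. A feasible solution consists of at most $|K|$ routes $(0,w_1,\dots,w_m,0)$ such that every task lies in exactly one route, each route has total demand at most $Q$, and there are start times $b_w\in[\alpha_w,\beta_w]$ for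 all tasks with $b_{w_{i+1}}\ge b_{w_i}+d_{w_i}+t_{w_iw_{i+1}}$ along each route (with the depot departure at time $\ge 0$ and return by $T_{\max}$), and all pairs in $D$ satisfying their dependency; its cost is the total travel cost. Optimal means minimum cost. The fragments of a route are its maximal subsequences $(v_1,\dots,v_\ell)$ whose first and last elements are consecutive occurrences (along the route) of nodes from $V_D\cup\{0\}$. *)

From HB Require Import structures.
From mathcomp Require Import all_boot all_order all_algebra.
Set Implicit Arguments. Unset Strict Implicit. Unset Printing Implicit Defensive.
Import Order.TTheory GRing.Theory Num.Theory.
Local Open Scope ring_scope.

(* Nodes are natural numbers: depot 0, tasks V = {1,...,n}, N = {0,...,n}. *)
Record instance (R : realFieldType) := Instance {
  n_tasks : nat;
  n_vehicles : nat;
  capQ : R;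
  Tmax : R;
  ttime : nat -> nat -> R;
  tcost : nat -> nat -> R;
  dur : nat -> R;
  dem : nat -> R;
  alpha : nat -> R;
  beta : nat -> R;
  deps : seq (nat * nat);        (* D : each pair (u,v) stands for {u,v} *)
  dmin : nat -> nat -> R;
  dmax : nat -> nat -> R
}.

Section Defs.
Variables (R : realFieldType) (I : instance R).

Definition is_task (v : nat) : bool := (1 <= v <= n_tasks I)%N.
Definition is_node (v : nat) : bool := (v <= n_tasks I)%N.

Definition wf_instance : Prop :=
  [/\ (forall u v, is_node u -> is_node v -> u != v ->
          0 <= ttime I u v /\ 0 <= tcost I u v),
      (forall u v w, is_node u -> is_node v -> is_node w ->
          u != v -> v != w -> u != w ->
          ttime I u v <= ttime I u w + ttime I w v /\
          tcost I u v <= tcost I u w + tcost I w v),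
      (forall v, is_node v -> 0 <= dur I v /\ 0 <= dem I v),
      [/\ dur I 0 = 0, dem I 0 = 0, alpha I 0 = 0 & beta I 0 = Tmax I]
    & (forall e, e \in deps I ->
          [/\ is_task e.1, is_task e.2, e.1 != e.2,
              0 <= dmin I e.1 e.2 /\ 0 <= dmax I e.1 e.2
            & 0 <= dmin I e.2 e.1 /\ 0 <= dmax I e.2 e.1])].

Definition in_VD0 (v : nat) : bool :=
  (v == 0%N) || (is_task v && has (fun e => (e.1 == v) || (e.2 == v)) (deps I)).

Definition route_nodes (w : seq nat) : seq nat := 0%N :: w ++ [:: 0%N].

Definition route_times (s : R) (b : nat -> R) (w : seq nat) : seq R :=
  s :: map b w.

Definition route_cost (w : seq nat) : R :=
  \sum_(i < (size w).+1)
     tcost I (nth 0%N (route_nodes w) i) (nth 0%N (route_nodes w) i.+1).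

Definition sol_cost (routes : seq (seq nat)) : R :=
  \sum_(w <- routes) route_cost w.

Definition dep_ok (b : nat -> R) (u v : nat) : Prop :=
  (b u <= b v /\ dmin I u v <= b v - b u <= dmax I u v) \/
  (b v <= b u /\ dmin I v u <= b u - b v <= dmax I v u).

Definition route_time_ok (s : R) (b : nat -> R) (w : seq nat) : Prop :=
  let p := route_nodes w in
  let tm := route_times s b w in
  [/\ 0 <= s,
      (forall i, (i < size w)%N ->
         nth 0 tm i + dur I (nth 0%N p i) + ttime I (nth 0%N p i) (nth 0%N p i.+1)
           <= nth 0 tm i.+1)
    & nth 0 tm (size w) + dur I (nth 0%N p (size w))
        + ttime I (nth 0%N p (size w)) 0%N <= Tmax I].

(* A solution: a list of routes (task sequences), start times b for tasks,
   and a departure time dep r for the r-th route. *)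
Definition feasible (routes : seq (seq nat)) (b : nat -> R) (dep : nat -> R)
  : Prop :=
  [/\ (size routes <= n_vehicles I)%N,
      all (fun w => w != [::]) routes,
      perm_eq (flatten routes) (iota 1 (n_tasks I)),
      (forall w, w \in routes -> \sum_(v <- w) dem I v <= capQ I) &
      [/\ (forall v, is_task v -> alpha I v <= b v <= beta I v),
      (forall r, (r < size routes)%N -> route_time_ok (dep r) b (nth [::] routes r))
    & (forall e, e \in deps I -> dep_ok b e.1 e.2)]].

Definition optimal (routes : seq (seq nat)) (b : nat -> R) (dep : nat -> R)
  : Prop :=
  feasible routes b dep /\
  forall routes' b' dep', feasible routes' b' dep' ->
    sol_cost routes <= sol_cost routes'.

Definition is_fragment (p : seq nat) (j k : nat) : Prop :=
  [/\ (j < k < size p)%N, in_VD0 (nth 0%N p j), in_VD0 (nth 0%N p k)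
    & forall i, (j < i < k)%N -> ~~ in_VD0 (nth 0%N p i)].

Definition compact_fragments (routes : seq (seq nat)) (b : nat -> R)
  (dep : nat -> R) : Prop :=
  forall r, (r < size routes)%N ->
    let w := nth [::] routes r in
    let p := route_nodes w in
    let tm := route_times (dep r) b w in
    forall j k, is_fragment p j k ->
      forall i, (j < i < k)%N ->
        nth 0 tm i =
          Num.max (nth 0 tm i.-1 + dur I (nth 0%N p i.-1)
                     + ttime I (nth 0%N p i.-1) (nth 0%N p i))
                  (alpha I (nth 0%N p i)).

End Defs.

(* A feasible solution with minimum cost exists because only finitely many
   route sets are feasible and the cost depends on the routes alone.  Given an
   optimal solution, keep the route departures and the start times of the
   nodes of V_D untouched, and reschedule every other task as early as
   possible after its predecessor.  By induction along the route the new start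
   times never exceed the old ones, so the deadlines and the return to the
   depot stay satisfied; dependencies only involve nodes of V_D, and the
   routes, hence the cost, are unchanged. *)
From mathcomp Require Import all_boot all_order all_algebra.
From Stdlib Require Import Classical.
Set Implicit Arguments. Unset Strict Implicit. Unset Printing Implicit Defensive.
Import Order.TTheory GRing.Theory Num.Theory.
Local Open Scope ring_scope.

Section SeqFacts.
Variable T : eqType.

Fixpoint seqs_of_size (A : seq T) (k : nat) : seq (seq T) :=
  if k is k'.+1 then [seq x :: s | x <- A, s <- seqs_of_size A k'] else [:: [::]].

Lemma mem_seqs_of_size (A s : seq T) :
  {subset s <= A} -> s \in seqs_of_size A (size s).
Proof.
elim: s => [|x s IH] //= sA.
apply/allpairsP; exists (x, s); split => //=.
  by apply: sA; rewrite mem_head.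
by apply: IH => y ys; apply: sA; rewrite inE ys orbT.
Qed.

Definition seqs_upto (A : seq T) (n : nat) : seq (seq T) :=
  flatten [seq seqs_of_size A k | k <- iota 0 n.+1].

Lemma mem_seqs_upto (A s : seq T) (n : nat) :
  (size s <= n)%N -> {subset s <= A} -> s \in seqs_upto A n.
Proof.
move=> sn sA; apply/flatten_mapP; exists (size s); last exact: mem_seqs_of_size.
by rewrite mem_iota add0n ltnS.
Qed.

Lemma uniq_flatten_mem (ss : seq (seq T)) (s : seq T) :
  uniq (flatten ss) -> s \in ss -> uniq s.
Proof.
elim: ss => [|a ss IH] //=; rewrite cat_uniq => /and3P[ua _ uss].
by rewrite inE => /predU1P[->|/IH]; last exact.
Qed.

Lemma find_uniq_flatten (ss : seq (seq T)) (r : nat) (y : T) :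
  uniq (flatten ss) -> (r < size ss)%N -> y \in nth [::] ss r ->
  find (fun s => y \in s) ss = r.
Proof.
elim: ss r => [|a ss IH] r //=; rewrite cat_uniq => /and3P[_ disj uss].
case: r => [|r] /= r_lt y_r; first by rewrite y_r.
have y_ss : y \in flatten ss by apply/flattenP; exists (nth [::] ss r) => //; exact: mem_nth.
have -> : (y \in a) = false.
  by apply: contraNF disj => y_a; apply/hasP; exists y.
by rewrite (IH r).
Qed.

End SeqFacts.

Lemma exists_argmin (T : eqType) (d : Order.disp_t) (R : orderType d)
    (L : seq T) (P : T -> Prop) (f : T -> R) :
  (forall x, P x -> x \in L) -> (exists x, P x) ->
  exists2 x, P x & forall y, P y -> (f x <= f y)%O.
Proof.
elim: L P => [|a L IH] P PL [x Px]; first by have := PL x Px.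
pose P' y := P y /\ y != a.
have P'L y : P' y -> y \in L.
  by case=> /PL; rewrite inE => /predU1P[->|//]; rewrite eqxx.
have P_P' y : P y -> y = a \/ P' y.
  by move=> Py; case: (eqVneq y a) => [|ya]; [left | right].
case: (classic (exists y, P' y)) => [/(IH P' P'L)[m [Pm _] m_min] | noP'].
  case: (classic (P a)) => [Pa | nPa].
    case: (leP (f a) (f m)) => [am | ma].
      by exists a => // y /P_P'[->//|/m_min]; exact: le_trans.
    by exists m => // y /P_P'[->|/m_min//]; exact: ltW.
  exists m => // y Py; case: (P_P' y Py) => [ya|/m_min//].
  by rewrite ya in Py.
have only_a y : P y -> y = a by move/P_P' => [//|P'y]; case: noP'; exists y.
by exists x => // y /only_a->; rewrite (only_a x Px).
Qed.

Lemma route_nodes_nth (w : seq nat) (i : nat) :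
  (i < size w)%N -> nth 0%N (route_nodes w) i.+1 = nth 0%N w i.
Proof. by move=> i_lt; rewrite /route_nodes /= nth_cat i_lt. Qed.

Lemma route_times_nth (R : realFieldType) (s : R) (b : nat -> R) (w : seq nat) (i : nat) :
  (i < size w)%N -> nth 0 (route_times s b w) i.+1 = b (nth 0%N w i).
Proof. by move=> i_lt; rewrite /route_times /= (nth_map 0%N). Qed.

Section OptimalRoutes.
Variables (R : realFieldType) (I : instance R).

Lemma feasible_uniq_routes routes b dep :
  feasible I routes b dep -> uniq (flatten routes).
Proof. by case=> _ _ perm_tasks _ _; rewrite (perm_uniq perm_tasks) iota_uniq. Qed.

Lemma feasible_mem_route_sets routes : (exists b dep, feasible I routes b dep) ->
  routes \in seqs_upto (seqs_upto (iota 1 (n_tasks I)) (n_tasks I)) (n_vehicles I).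
Proof.
move=> [b [dep F]]; have [size_routes _ perm_tasks _ _] := F.
apply: mem_seqs_upto => // w w_routes.
have w_tasks : {subset w <= iota 1 (n_tasks I)}.
  by move=> y y_w; rewrite -(perm_mem perm_tasks); apply/flattenP; exists w.
apply: (mem_seqs_upto _ w_tasks).
rewrite -(size_iota 1 (n_tasks I)).
exact: uniq_leq_size (uniq_flatten_mem (feasible_uniq_routes F) w_routes) w_tasks.
Qed.

Lemma exists_min_cost_routes :
  (exists routes b dep, feasible I routes b dep) ->
  exists2 routes, (exists b dep, feasible I routes b dep) &
    forall routes' b' dep', feasible I routes' b' dep' ->
      sol_cost I routes <= sol_cost I routes'.
Proof.
move=> feasible_exists.
have [opt opt_feas opt_min] :=
  exists_argmin (sol_cost I) (@feasible_mem_route_sets) feasible_exists.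
by exists opt => // routes' b' dep' F'; apply: opt_min; exists b', dep'.
Qed.

End OptimalRoutes.

Section CompactSchedule.
Variables (R : realFieldType) (I : instance R).

Fixpoint compact_time (s : R) (b : nat -> R) (p : seq nat) (i : nat) : R :=
  if i is i'.+1 then
    let u := nth 0%N p i' in
    let v := nth 0%N p i'.+1 in
    if in_VD0 I v then b v
    else Num.max (compact_time s b p i' + dur I u + ttime I u v) (alpha I v)
  else s.

Section Route.
Variables (s : R) (b : nat -> R) (w : seq nat).
Hypothesis w_ok : route_time_ok I s b w.
Hypothesis alpha_le_b : forall x, x \in w -> alpha I x <= b x.
Let p := route_nodes w.

Lemma compact_time_le (i : nat) :
  (i <= size w)%N -> compact_time s b p i <= nth 0 (route_times s b w) i.
Proof.
case: w_ok => _ step _.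
elim: i => [|i IH] i_le //; rewrite route_times_nth //= nth_cat i_le.
case: ifP => _ //; rewrite ge_max alpha_le_b ?mem_nth // andbT.
have := step i i_le; rewrite route_times_nth // route_nodes_nth //.
by apply: le_trans; rewrite !lerD2r; apply: IH (ltnW i_le).
Qed.

Lemma alpha_le_compact_time (i : nat) :
  (i < size w)%N -> alpha I (nth 0%N w i) <= compact_time s b p i.+1.
Proof.
move=> i_lt /=; rewrite nth_cat i_lt.
by case: ifP => _; [rewrite alpha_le_b ?mem_nth | rewrite le_max lexx orbT].
Qed.

Lemma compact_time_step (i : nat) : (i < size w)%N ->
  compact_time s b p i + dur I (nth 0%N p i) + ttime I (nth 0%N p i) (nth 0%N p i.+1)
    <= compact_time s b p i.+1.
Proof.
case: w_ok => _ step _ i_lt; rewrite [compact_time _ _ _ i.+1]/= -/p.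
case: ifP => _; last by rewrite le_max lexx.
have -> : b (nth 0%N p i.+1) = nth 0 (route_times s b w) i.+1.
  by rewrite route_times_nth // route_nodes_nth.
apply: le_trans (step i i_lt).
by rewrite !lerD2r; apply: compact_time_le; exact: ltnW.
Qed.

End Route.

Definition compact_start (routes : seq (seq nat)) (b dep : nat -> R) (y : nat) : R :=
  let r := find (fun w => y \in w) routes in
  let w := nth [::] routes r in
  if (r < size routes)%N && ~~ in_VD0 I y then
    compact_time (dep r) b (route_nodes w) (index y w).+1
  else b y.

Lemma compact_start_VD0 routes b dep y :
  in_VD0 I y -> compact_start routes b dep y = b y.
Proof. by move=> y_VD0; rewrite /compact_start y_VD0 andbF. Qed.

Section Solution.
Variables (routes : seq (seq nat)) (b dep : nat -> R).
Hypothesis F : feasible I routes b dep.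
Let b' := compact_start routes b dep.

Lemma feasible_alpha_le_route (r : nat) : (r < size routes)%N ->
  forall x, x \in nth [::] routes r -> alpha I x <= b x.
Proof.
case: F => _ _ perm_tasks _ [window _ _] r_lt x x_r.
have : x \in flatten routes by apply/flattenP; exists (nth [::] routes r); rewrite ?mem_nth.
rewrite (perm_mem perm_tasks) mem_iota add1n ltnS => x_task.
by case/andP: (window x x_task).
Qed.

Lemma route_times_compact (r : nat) : (r < size routes)%N ->
  forall i, (i <= size (nth [::] routes r))%N ->
  nth 0 (route_times (dep r) b' (nth [::] routes r)) i =
    compact_time (dep r) b (route_nodes (nth [::] routes r)) i.
Proof.
move=> r_lt [|i] i_le //; set w := nth [::] routes r.
have y_w : nth 0%N w i \in w by exact: mem_nth.
have uniq_w : uniq w by apply: uniq_flatten_mem (feasible_uniq_routes F) _; exact: mem_nth.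
rewrite route_times_nth // /b' /compact_start.
rewrite (find_uniq_flatten (feasible_uniq_routes F) r_lt y_w) r_lt -/w index_uniq //=.
by rewrite nth_cat i_le; case: (in_VD0 _ _).
Qed.

Lemma compact_start_window (v : nat) : is_task I v -> alpha I v <= b' v <= beta I v.
Proof.
case: F => _ _ _ _ [window time _] v_task.
rewrite /b' /compact_start; case: ifP => [/andP[r_lt _] | _]; last exact: window.
set r := find _ routes in r_lt *; set w := nth [::] routes r.
have v_w : v \in w by apply: (@nth_find _ [::] (fun w => v \in w)); rewrite has_find.
have i_lt : (index v w < size w)%N by rewrite index_mem.
have alpha_le_b := feasible_alpha_le_route r_lt.
apply/andP; split.
  by have := alpha_le_compact_time (dep r) alpha_le_b i_lt; rewrite nth_index.
apply: le_trans (compact_time_le (time r r_lt) alpha_le_b i_lt) _.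
by rewrite route_times_nth // nth_index //; case/andP: (window v v_task).
Qed.

Lemma compact_route_time_ok (r : nat) : (r < size routes)%N ->
  route_time_ok I (dep r) b' (nth [::] routes r).
Proof.
case: F => _ _ _ _ [_ time _] r_lt; set w := nth [::] routes r.
have alpha_le_b := feasible_alpha_le_route r_lt.
have w_ok := time r r_lt; case: (w_ok) => dep_ge0 _ back.
split => // [i i_lt|].
  rewrite !route_times_compact // ?(ltnW i_lt) //.
  exact: compact_time_step w_ok alpha_le_b _ i_lt.
rewrite route_times_compact //; apply: le_trans back; rewrite !lerD2r.
exact: compact_time_le w_ok alpha_le_b _ (leqnn _).
Qed.

Lemma compact_dep_ok : wf_instance I -> forall e, e \in deps I -> dep_ok I b' e.1 e.2.
Proof.
case=> _ _ _ _ deps_wf e e_deps; have [task1 task2 _ _ _] := deps_wf e e_deps.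
have VD1 : in_VD0 I e.1.
  by rewrite /in_VD0 task1; apply/orP; right; apply/hasP; exists e; rewrite ?eqxx.
have VD2 : in_VD0 I e.2.
  by rewrite /in_VD0 task2; apply/orP; right; apply/hasP; exists e; rewrite ?eqxx ?orbT.
by rewrite /dep_ok /b' !compact_start_VD0 //; case: F => _ _ _ _ [_ _]; apply.
Qed.

Lemma compact_feasible : wf_instance I -> feasible I routes b' dep.
Proof.
move=> wf; case: F => ? ? ? ? _; split=> //.
by split; [exact: compact_start_window | exact: compact_route_time_ok | exact: compact_dep_ok].
Qed.

Lemma compact_start_fragments : compact_fragments I routes b' dep.
Proof.
move=> r r_lt /= j k [/andP[_ k_lt] _ _ inner] [//|i] /andP[j_lt i_lt].
have i_le : (i < size (nth [::] routes r))%N.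
  by move: k_lt; rewrite /route_nodes /= size_cat /= addn1 ltnS => /(leq_trans i_lt).
rewrite !route_times_compact // ?(ltnW i_le) //=.
by rewrite (negbTE (inner i.+1 _)) // j_lt i_lt.
Qed.

End Solution.

End CompactSchedule.

Theorem mainTheorem3 (R : realFieldType) (I : instance R) :
  wf_instance I ->
  (exists routes b dep, feasible I routes b dep) ->
  exists routes b dep,
    optimal I routes b dep /\ compact_fragments I routes b dep.
Proof.
move=> wf /exists_min_cost_routes[routes [b [dep F]] min_cost].
exists routes, (compact_start I routes b dep), dep; split; last first.
  exact: compact_start_fragments.
by split; [exact: compact_feasible | exact: min_cost].
Qed.
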